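(* Let $s=\tfrac12$, $\lambda\in\mathbb{C}$ and $k\in\mathbb{Z}$. Every odd superderivation of $\mathfrak{L}^{1/2}_\lambda$ of degree $k+\tfrac12$ is inner; more precisely, it equals $\mathrm{ad}(aG_{k+1/2}+bH_{k+1/2})$ for some $a,b\in\mathbb{C}$.
   Context: For $s\in\{0,\tfrac12\}$ and $\lambda\in\mathbb{C}$, $\mathfrak{L}^s_\lambda$ is the complex Lie superalgebra with basis $\{L_m,I_m,G_p,H_p : m\in\mathbb{Z},\ p\in s+\mathbb{Z}\}$, even part spanned by the $L_m,I_m$, odd part spanned by the $G_p,H_p$, and brackets $[L_m,L_n]=(m-n)L_{m+n}$, $[L_m,I_n]=(m-n)I_{m+n}$, $[L_m,H_p]=(\tfrac m2-p)H_{m+p}$, $[L_m,G_p]=(\tfrac m2-p)G_{m+p}+\lambda(m+1)H_{m+p}$, $[I_m,G_p]=(m-2p)H_{m+p}$, $[G_p,G_q]=I_{p+q}$, plus those given by super-antisymmetry $[y,x]=-(-1)^{|x||y|}[x,y]$; all other brackets of basis elements are zero. $\mathfrak{L}_r$ ($r\in\tfrac12\mathbb{Z}$) is spanned by basis elements of index $r$. A superderivation of parity $a$ is a linear map $D$ shifting parity by $a$ with $D([x,y])=[D(x),y]+(-1)^{a|x|}[x,D(y)]$ for homogeneous $x,y$; it has degree $r$ if $D(\mathfrak{L}_q)\subset\mathfrak{L}_{q+r}$. $\mathrm{ad}\,x(y)=[x,y]$. *)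

From HB Require Import structures.
From mathcomp Require Import all_boot all_order all_algebra.
Set Implicit Arguments. Unset Strict Implicit. Unset Printing Implicit Defensive.
Import Order.TTheory GRing.Theory Num.Theory.
Local Open Scope ring_scope.

(* Basis labels of L^{1/2}_lambda.
   BL m = L_m, BI m = I_m  (m : int),
   BG n = G_{n+1/2}, BH n = H_{n+1/2}  (n : int), since p ranges over 1/2 + Z. *)
Inductive sbasis := BL of int | BI of int | BG of int | BH of int.

Definition sb_code (b : sbasis) : nat * int :=
  match b with BL m => (0%N, m) | BI m => (1%N, m) | BG n => (2%N, n) | BH n => (3%N, n) end.
Definition sb_decode (p : nat * int) : option sbasis :=
  match p with
  | (0%N, m) => Some (BL m) | (1%N, m) => Some (BI m)
  | (2%N, n) => Some (BG n) | (3%N, n) => Some (BH n) | _ => None end.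
Lemma sb_codeK : pcancel sb_code sb_decode. Proof. by case. Qed.
HB.instance Definition _ := Equality.copy sbasis (pcan_type sb_codeK).

Definition idx2 (b : sbasis) : int :=
  match b with BL m | BI m => 2 * m | BG n | BH n => 2 * n + 1 end.

Definition even_b (b : sbasis) : bool :=
  match b with BL _ | BI _ => true | _ => false end.
Definition odd_b (b : sbasis) : bool := ~~ even_b b.

(* With p = n + 1/2:
   m/2 - p = (m - 2n - 1)/2,  m - 2p = m - 2n - 1,  m + p = (m+n) + 1/2,
   p + q = n + n' + 1. *)
Definition half_bracket_table (F : fieldType) (V : lmodType F) (e : sbasis -> V)
    (lam : F) (x y : sbasis) : V :=
  match x, y with
  | BL m, BL n => (m - n)%:~R *: e (BL (m + n))
  | BL m, BI n => (m - n)%:~R *: e (BI (m + n))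
  | BI n, BL m => - ((m - n)%:~R *: e (BI (m + n)))
  | BL m, BH n => ((m - 2 * n - 1)%:~R / 2) *: e (BH (m + n))
  | BH n, BL m => - (((m - 2 * n - 1)%:~R / 2) *: e (BH (m + n)))
  | BL m, BG n => ((m - 2 * n - 1)%:~R / 2) *: e (BG (m + n))
                  + (lam * (m + 1)%:~R) *: e (BH (m + n))
  | BG n, BL m => - (((m - 2 * n - 1)%:~R / 2) *: e (BG (m + n))
                  + (lam * (m + 1)%:~R) *: e (BH (m + n)))
  | BI m, BG n => (m - 2 * n - 1)%:~R *: e (BH (m + n))
  | BG n, BI m => - ((m - 2 * n - 1)%:~R *: e (BH (m + n)))
  | BG n, BG n' => e (BI (n + n' + 1))
  | _, _ => 0
  end.

Definition inspan (F : fieldType) (V : lmodType F) (e : sbasis -> V)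
    (P : pred sbasis) (v : V) : Prop :=
  exists s : seq sbasis, exists c : sbasis -> F,
    all P s /\ v = \sum_(b <- s) c b *: e b.

Definition is_basis (F : fieldType) (V : lmodType F) (e : sbasis -> V) : Prop :=
  (forall v : V, inspan e predT v) /\
  (forall (s : seq sbasis) (c : sbasis -> F), uniq s ->
     \sum_(b <- s) c b *: e b = 0 -> forall b, b \in s -> c b = 0).

Record is_L_half (F : fieldType) (V : lmodType F) (brk : V -> V -> V)
    (e : sbasis -> V) (lam : F) : Prop := {
  Lh_basis : is_basis e;
  Lh_linl : forall (a : F) (u v w : V), brk (a *: u + v) w = a *: brk u w + brk v w;
  Lh_linr : forall (a : F) (u v w : V), brk w (a *: u + v) = a *: brk w u + brk w v;
  Lh_table : forall x y : sbasis, brk (e x) (e y) = half_bracket_table e lam x y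
}.

Definition even_el (F : fieldType) (V : lmodType F) (e : sbasis -> V) (v : V) :=
  inspan e even_b v.
Definition odd_el (F : fieldType) (V : lmodType F) (e : sbasis -> V) (v : V) :=
  inspan e odd_b v.
Definition homog (F : fieldType) (V : lmodType F) (e : sbasis -> V) (v : V) :=
  even_el e v \/ odd_el e v.
(* v in L_r where t = 2r *)
Definition in_grade (F : fieldType) (V : lmodType F) (e : sbasis -> V) (t : int) (v : V) :=
  inspan e (fun b => idx2 b == t) v.

(* D is an odd superderivation (parity a = 1) of degree k + 1/2:
   D is linear, shifts parity by 1, satisfies
   D[x,y] = [Dx,y] + (-1)^{|x|} [x,Dy] for homogeneous x, y,
   and maps L_q into L_{q + k + 1/2} (grades stored doubled). *)
Record odd_superder_deg (F : fieldType) (V : lmodType F) (brk : V -> V -> V)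
    (e : sbasis -> V) (D : V -> V) (k : int) : Prop := {
  osd_lin : forall (a : F) (u v : V), D (a *: u + v) = a *: D u + D v;
  osd_even : forall v, even_el e v -> odd_el e (D v);
  osd_odd : forall v, odd_el e v -> even_el e (D v);
  osd_der_even : forall x y, even_el e x -> homog e y ->
                   D (brk x y) = brk (D x) y + brk x (D y);
  osd_der_odd : forall x y, odd_el e x -> homog e y ->
                   D (brk x y) = brk (D x) y - brk x (D y);
  osd_deg : forall (t : int) (v : V), in_grade e t v -> in_grade e (t + (2 * k + 1)) (D v)
}.

From HB Require Import structures.
From mathcomp Require Import all_boot all_order all_algebra.
From mathcomp Require Import zify ring.
Import GRing.Theory Num.Theory.
Set Implicit Arguments. Unset Strict Implicit.
Local Open Scope ring_scope.

(* Let X := a G_k + b H_k be chosen so that [X, L_0] = D L_0; this is possible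
   because [L_0, G_k] = -(k + 1/2) G_k + lam H_k and [L_0, H_k] = -(k + 1/2) H_k
   with k + 1/2 <> 0.  Applying D to [L_0, y] for a basis vector y of index q gives
   D[L_0, y] = [D L_0, y] + [L_0, D y], where D y lies in the two-dimensional space
   of index q + k + 1/2.  On that space [L_0, -] is -(q + k + 1/2) up to the nilpotent
   lam-twist G_p |-> H_p, so the identity determines D y uniquely, with the unknown
   coefficients appearing with factor k + 1/2; solving it gives D y = [X, y]. *)

Section Span.
Variables (F : fieldType) (V : lmodType F) (e : sbasis -> V).

Lemma inspan_basis (P : pred sbasis) b : P b -> inspan e P (e b).
Proof.
move=> Pb; exists [:: b], (fun _ => 1); split; first by rewrite /= Pb.
by rewrite big_seq1 scale1r.
Qed.

Lemma homog_basis b : homog e (e b).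
Proof. by case: b => n; [left|left|right|right]; apply: inspan_basis. Qed.

Lemma inspan_pair (P : pred sbasis) u w v :
  (forall b, P b -> b = u \/ b = w) -> inspan e P v ->
  exists x y : F, v = x *: e u + y *: e w.
Proof.
move=> Puw [s [c [Ps ->]]]; elim: s Ps => [|b s IH] /=.
  by move=> _; exists 0, 0; rewrite big_nil !scale0r addr0.
rewrite big_cons => /andP[/Puw[]-> /IH[x [y ->]]].
  by exists (c u + x), y; rewrite scalerDl addrA.
by exists x, (c w + y); rewrite scalerDl addrCA.
Qed.

Lemma in_grade_odd n v :
  in_grade e (2 * n + 1) v -> exists x y : F, v = x *: e (BG n) + y *: e (BH n).
Proof.
by apply: inspan_pair => -[m|m|m|m] /eqP /= ?; [lia|lia|left|right]; congr BG || congr BH; lia.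
Qed.

Lemma in_grade_even n v :
  in_grade e (2 * n) v -> exists x y : F, v = x *: e (BL n) + y *: e (BI n).
Proof.
by apply: inspan_pair => -[m|m|m|m] /eqP /= ?; [left|right|lia|lia]; congr BL || congr BI; lia.
Qed.

Definition comb2 u w (x y : F) : V := x *: e u + y *: e w.

Lemma comb2D u w x1 y1 x2 y2 :
  comb2 u w x1 y1 + comb2 u w x2 y2 = comb2 u w (x1 + x2) (y1 + y2).
Proof. by rewrite /comb2 !scalerDl addrACA. Qed.
Lemma comb2N u w x y : - comb2 u w x y = comb2 u w (- x) (- y).
Proof. by rewrite /comb2 opprD !scaleNr. Qed.
Lemma comb2Z u w c x y : c *: comb2 u w x y = comb2 u w (c * x) (c * y).
Proof. by rewrite /comb2 scalerDr !scalerA. Qed.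
Lemma comb2_fst u w : e u = comb2 u w 1 0.
Proof. by rewrite /comb2 scale1r scale0r addr0. Qed.
Lemma comb2_snd u w : e w = comb2 u w 0 1.
Proof. by rewrite /comb2 scale1r scale0r add0r. Qed.
Lemma comb2_0 u w : 0 = comb2 u w 0 0.
Proof. by rewrite /comb2 !scale0r addr0. Qed.

Lemma comb2_inj u w (x1 y1 x2 y2 : F) :
  is_basis e -> u != w -> comb2 u w x1 y1 = comb2 u w x2 y2 -> x1 = x2 /\ y1 = y2.
Proof.
move=> [_ e_free] uw E.
pose c b := if b == u then x1 - x2 else y1 - y2.
have uniq_uw : uniq [:: u; w] by rewrite /= inE uw.
have c0 : \sum_(b <- [:: u; w]) c b *: e b = 0.
  rewrite big_cons big_seq1 /c eqxx eq_sym (negbTE uw) !scalerBl addrACA -opprD.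
  by rewrite -!/(comb2 _ _ _ _) E subrr.
have := e_free _ c uniq_uw c0 u; have := e_free _ c uniq_uw c0 w.
rewrite /c eqxx eq_sym (negbTE uw) !inE !eqxx orbT => /(_ isT) /eqP.
by rewrite subr_eq0 => /eqP -> /(_ isT) /eqP; rewrite subr_eq0 => /eqP ->.
Qed.

End Span.

Lemma cancel_linear_eq (F : fieldType) (c x x' l r : F) :
  c != 0 -> l = r -> c * (x - x') = l - r -> x = x'.
Proof.
by move=> c0 -> /eqP; rewrite subrr mulf_eq0 (negbTE c0) subr_eq0 => /eqP.
Qed.

Section OddDerivation.
Variables (F : numFieldType) (V : lmodType F) (brk : V -> V -> V).
Variables (e : sbasis -> V) (lam : F) (k : int) (D : V -> V).
Hypotheses (L_half : is_L_half brk e lam) (D_der : odd_superder_deg brk e D k).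

Let D_lin : linear D := osd_lin D_der.
Let brkl_lin w : linear (brk ^~ w) := fun a u v => Lh_linl L_half a u v w.
Let brkr_lin w : linear (brk w) := fun a u v => Lh_linr L_half a u v w.

Lemma D_even_basis b m : idx2 b = 2 * m ->
  exists x y : F, D (e b) = x *: e (BG (m + k)) + y *: e (BH (m + k)).
Proof.
move=> b_m; apply: in_grade_odd.
have -> : 2 * (m + k) + 1 = idx2 b + (2 * k + 1) by rewrite b_m; lia.
exact: (osd_deg D_der (inspan_basis e (P := fun c => idx2 c == idx2 b) (eqxx _))).
Qed.

Lemma D_odd_basis b n : idx2 b = 2 * n + 1 ->
  exists x y : F, D (e b) = x *: e (BL (n + k + 1)) + y *: e (BI (n + k + 1)).
Proof.
move=> b_n; apply: in_grade_even.
have -> : 2 * (n + k + 1) = idx2 b + (2 * k + 1) by rewrite b_n; lia.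
exact: (osd_deg D_der (inspan_basis e (P := fun c => idx2 c == idx2 b) (eqxx _))).
Qed.

Let brkE := Lh_table L_half.

Lemma DD u v : D (u + v) = D u + D v.
Proof. exact: (GRing.semilinear_linear D_lin).2. Qed.
Lemma DZ a v : D (a *: v) = a *: D v.
Proof. exact: (GRing.scalable_linear D_lin). Qed.
Lemma brkDl u v w : brk (u + v) w = brk u w + brk v w.
Proof. exact: (GRing.semilinear_linear (brkl_lin w)).2. Qed.
Lemma brkZl a v w : brk (a *: v) w = a *: brk v w.
Proof. exact: (GRing.scalable_linear (brkl_lin w)). Qed.
Lemma brkDr w u v : brk w (u + v) = brk w u + brk w v.
Proof. exact: (GRing.semilinear_linear (brkr_lin w)).2. Qed.
Lemma brkZr w a v : brk w (a *: v) = a *: brk w v.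
Proof. exact: (GRing.scalable_linear (brkr_lin w)). Qed.

Lemma brkNl v w : brk (- v) w = - brk v w.
Proof. by rewrite -scaleN1r brkZl scaleN1r. Qed.
Lemma brkNr w v : brk w (- v) = - brk w v.
Proof. by rewrite -scaleN1r brkZr scaleN1r. Qed.

Lemma D_brk_L0 y :
  D (brk (e (BL 0)) (e y)) = brk (D (e (BL 0))) (e y) + brk (e (BL 0)) (D (e y)).
Proof.
exact: (osd_der_even D_der (inspan_basis _ (isT : even_b (BL 0))) (homog_basis e y)).
Qed.

(* The table can return brackets of linear combinations, hence two passes. *)
Ltac expand_brackets Dv :=
  do 2 rewrite ?(brkDl, brkDr, brkNl, brkNr, brkZl, brkZr, DD, DZ, brkE) /=
    ?(add0r, scaler0, addr0, oppr0, Dv).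

Ltac to_comb2 u w :=
  rewrite ?(comb2_fst e u w) ?(comb2_snd e u w) ?(comb2_0 e u w) !(comb2N, comb2Z, comb2D).

Ltac coordinates u w :=
  to_comb2 u w; move=> E; have [//|E1 E2] := comb2_inj (Lh_basis L_half) _ E.

(* Also closes, by assumption, the side conditions left by [field] below. *)
Let k0 : 2 * k%:~R + 1 != 0 :> F.
Proof. by rewrite -[2]/(2%:~R) -[1]/(1%:~R) -intrM -intrD intr_eq0; lia. Qed.
Let c0 : (2 * k%:~R + 1) / 2 != 0 :> F.
Proof. by rewrite mulf_neq0 // invr_eq0 pnatr_eq0. Qed.

Lemma exists_ad_at_L0 : exists a b : F,
  D (e (BL 0)) = brk (a *: e (BG k) + b *: e (BH k)) (e (BL 0)).
Proof.
have [a0 [b0 ->]] := @D_even_basis (BL 0) 0 erefl.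
pose a := 2 * a0 / (2 * k%:~R + 1).
exists a, (2 * (b0 + a * lam) / (2 * k%:~R + 1)).
rewrite add0r !(brkDl, brkZl) !brkE /= !add0r; to_comb2 (BG k) (BH k).
by congr comb2; rewrite /a; field.
Qed.

Variables (a b : F).
Let X := a *: e (BG k) + b *: e (BH k).
Hypothesis D_L0 : D (e (BL 0)) = brk X (e (BL 0)).

Lemma D_H_eq0 n : D (e (BH n)) = 0.
Proof.
have [x [y Dx]] := @D_odd_basis (BH n) n erefl.
have := D_brk_L0 (BH n); rewrite D_L0 /X; expand_brackets Dx.
coordinates (BL (n + k + 1)) (BI (n + k + 1)).
have x_eq : x = 0 by apply: (cancel_linear_eq c0 E1); field.
have y_eq : y = 0 by apply: (cancel_linear_eq c0 E2); field.
by rewrite x_eq y_eq; congr comb2; ring.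
Qed.

Lemma D_L_ad n : D (e (BL n)) = brk X (e (BL n)).
Proof.
have [x [y Dx]] := @D_even_basis (BL n) n erefl.
have := D_brk_L0 (BL n); rewrite D_L0 /X; expand_brackets Dx.
coordinates (BG (n + k)) (BH (n + k)).
have x_eq : x = - a * (n - 2 * k - 1)%:~R / 2 by apply: (cancel_linear_eq c0 E1); field.
have y_eq : y = - a * lam * (n + 1)%:~R - b * (n - 2 * k - 1)%:~R / 2.
  by apply: (cancel_linear_eq c0 E2); rewrite x_eq; field.
by rewrite x_eq y_eq; congr comb2; ring.
Qed.

Lemma D_I_ad n : D (e (BI n)) = brk X (e (BI n)).
Proof.
have [x [y Dx]] := @D_even_basis (BI n) n erefl.
have := D_brk_L0 (BI n); rewrite D_L0 /X; expand_brackets Dx.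
coordinates (BG (n + k)) (BH (n + k)).
have x_eq : x = 0 by apply: (cancel_linear_eq c0 E1); field.
have y_eq : y = - a * (n - 2 * k - 1)%:~R.
  by apply: (cancel_linear_eq c0 E2); rewrite x_eq; field.
by rewrite x_eq y_eq; congr comb2; ring.
Qed.

(* [L_0, G_n] has an H_n component, whence the use of [D_H_eq0]. *)
Lemma D_G_ad n : D (e (BG n)) = brk X (e (BG n)).
Proof.
have [x [y Dx]] := @D_odd_basis (BG n) n erefl.
have := D_brk_L0 (BG n); rewrite D_L0 /X; expand_brackets (Dx, D_H_eq0).
rewrite (addrC k n); coordinates (BL (n + k + 1)) (BI (n + k + 1)).
have x_eq : x = 0 by apply: (cancel_linear_eq c0 E1); field.
have y_eq : y = a by apply: (cancel_linear_eq c0 E2); rewrite x_eq; field.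
by rewrite x_eq y_eq; congr comb2; ring.
Qed.

Lemma D_basis_ad y : D (e y) = brk X (e y).
Proof.
case: y => n; [exact: D_L_ad | exact: D_I_ad | exact: D_G_ad |].
by rewrite D_H_eq0 /X brkDl !brkZl !brkE /= !scaler0 addr0.
Qed.

Lemma D_ad v : D v = brk X v.
Proof.
have D0 : D 0 = 0 by move: (DZ 0 0); rewrite !scale0r.
have brk0r : brk X 0 = 0 by move: (brkZr X 0 0); rewrite !scale0r.
have [s [c [_ ->]]] := (Lh_basis L_half).1 v.
rewrite (big_morph D DD D0) (big_morph _ (brkDr X) brk0r).
by apply: eq_bigr => y _; rewrite DZ brkZr D_basis_ad.
Qed.

End OddDerivation.

Theorem lemma2p8 (F : numClosedFieldType) (V : lmodType F) (brk : V -> V -> V)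
    (e : sbasis -> V) (lam : F) (k : int) (D : V -> V) :
  is_L_half brk e lam -> odd_superder_deg brk e D k ->
  exists a b : F, forall v : V, D v = brk (a *: e (BG k) + b *: e (BH k)) v.
Proof.
move=> L_half D_der; have [a [b D_L0]] := exists_ad_at_L0 L_half D_der.
exists a, b; exact: (D_ad L_half D_der D_L0).
Qed.
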